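(* Let $D^k$ be a vertically mapped wedge with $J^k>0$. Define $(\bm S^k_z)_{ij,i'j'}=\int_{\widehat W}\frac{\partial\phi_{i'j'}}{\partial z}\,\ell_{ij}\,J^k$, where $\phi_{i'j'}=\ell_{i'j'}\circ(\bm\Phi^k)^{-1}$, and $\bm D^k_z=(\bm M^k)^{-1}\bm S^k_z$. Then $$\bm D^k_z=\bm L^{\mathrm{tri},k}\otimes\big(t_zJ^k\,\bm D^{\mathrm{1D}}_t\big),$$ where $t_zJ^k$ is the (constant) product of the geometric factor $t_z=\partial t/\partial z$ with $J^k$, and $\bm L^{\mathrm{tri},k}=(\bm M^{\mathrm{tri},k})^{-1}\widehat{\bm M}^{\mathrm{tri}}$.
   Context: Reference wedge $\widehat W=\widehat T\times[0,1]$ with $\widehat T=\{(r,s):r,s\ge0,\ r+s\le1\}$. Vertex functions $v_1=(1-r-s)(1-t)$, $v_2=r(1-t)$, $v_3=s(1-t)$, $v_4=(1-r-s)t$, $v_5=rt$, $v_6=st$; a wedge $D^k$ is the image of $\widehat W$ under $\bm{\Phi}^k=\sum_{i=1}^6\bm{\nu}_iv_i$ with vertices $\bm{\nu}_i\in\mathbb{R}^3$, $(x,y,z)=\bm\Phi^k(r,s,t)$, and $J^k=\det[\partial_r\bm{\Phi}^k,\partial_s\bm{\Phi}^k,\partial_t\bm{\Phi}^k]$. It is vertically mapped if the pairs $(\bm{\nu}_1,\bm{\nu}_4)$, $(\bm{\nu}_2,\bm{\nu}_5)$, $(\bm{\nu}_3,\bm{\nu}_6)$ each have identical $x$- and $y$-coordinates.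 Geometric factors $r_z=\partial r/\partial z$, $t_z=\partial t/\partial z$, etc., are entries of the inverse Jacobian matrix of $\bm\Phi^k$. Nodal basis: fix $N\ge1$, points $(r_i,s_i)$, $i=1,\dots,(N+1)(N+2)/2$, in $\widehat T$ unisolvent for polynomials of total degree $\le N$ with Lagrange basis $\ell^{\mathrm{tri}}_i$, and Gauss–Legendre–Lobatto points $0=t_0<\dots<t_N=1$ with Lagrange basis $\ell^{\mathrm{1D}}_j$; $\ell_{ij}=\ell^{\mathrm{tri}}_i(r,s)\ell^{\mathrm{1D}}_j(t)$. Matrices indexed by $(i,j)$ are ordered with $i$ the slow index, so $(\bm A\otimes\bm B)_{ij,i'j'}=\bm A_{ii'}\bm B_{jj'}$. Definitions: $(\bm M^k)_{ij,i'j'}=\int_{\widehat W}\ell_{ij}\ell_{i'j'}J^k$; $(\bm M^{\mathrm{tri},k})_{ii'}=\int_{\widehat T}\ell^{\mathrm{tri}}_i\ell^{\mathrm{tri}}_{i'}J^k(r,s)$ (where $J^k$ is independent of $t$ for vertically mapped wedges); $(\widehat{\bm M}^{\mathrm{tri}})_{ii'}=\int_{\widehat T}\ell^{\mathrm{tri}}_i\ell^{\mathrm{tri}}_{i'}$; $(\bm D^{\mathrm{1D}}_t)_{jj'}=(\ell^{\mathrm{1D}}_{j'})'(t_j)$. *)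

From Stdlib Require Import Reals Lra Lia List Classical ClassicalEpsilon ClassicalDescription.
Import ListNotations.
Open Scope R_scope.

(* Riemann integral of f over [a,b] (value of RiemannInt when f is
   Riemann integrable; 0 otherwise — never used for non-integrable f). *)
Definition Rint (f : R -> R) (a b : R) : R :=
  match excluded_middle_informative
          (exists v, exists pr : Riemann_integrable f a b, RiemannInt pr = v) with
  | left H => proj1_sig (constructive_indefinite_description _ H)
  | right _ => 0
  end.

(* derivative of f at x (when it exists; 0 otherwise) *)
Definition Deriv (f : R -> R) (x : R) : R :=
  match excluded_middle_informative (exists l, derivable_pt_lim f x l) with
  | left H => proj1_sig (constructive_indefinite_description _ H)
  | right _ => 0
  end.

Definition d_r (F : R -> R -> R -> R) r s t := Deriv (fun u => F u s t) r.
Definition d_s (F : R -> R -> R -> R) r s t := Deriv (fun u => F r u t) s.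
Definition d_t (F : R -> R -> R -> R) r s t := Deriv (fun u => F r s u) t.

Definition inT (r s : R) : Prop := 0 <= r /\ 0 <= s /\ r + s <= 1.
Definition inW (r s t : R) : Prop := inT r s /\ 0 <= t <= 1.

Definition Tint (g : R -> R -> R) : R :=
  Rint (fun r => Rint (fun s => g r s) 0 (1 - r)) 0 1.

Definition Wint (f : R -> R -> R -> R) : R :=
  Rint (fun t => Tint (fun r s => f r s t)) 0 1.

Definition vfun (i : nat) (r s t : R) : R :=
  match i with
  | 1%nat => (1 - r - s) * (1 - t)
  | 2%nat => r * (1 - t)
  | 3%nat => s * (1 - t)
  | 4%nat => (1 - r - s) * t
  | 5%nat => r * t
  | 6%nat => s * t
  | _ => 0
  end.

(* one coordinate of Phi = sum_{i=1}^6 nu_i v_i, given that coordinate of the vertices *)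
Definition Phic (nu : nat -> R) (r s t : R) : R :=
  fold_right (fun i acc => nu i * vfun i r s t + acc) 0 [1;2;3;4;5;6]%nat.

Definition Jac (vx vy vz : nat -> R) (r s t : R) : R :=
  let X := Phic vx in let Y := Phic vy in let Z := Phic vz in
  let xr := d_r X r s t in let xs := d_s X r s t in let xt := d_t X r s t in
  let yr := d_r Y r s t in let ys := d_s Y r s t in let yt := d_t Y r s t in
  let zr := d_r Z r s t in let zs := d_s Z r s t in let zt := d_t Z r s t in
  xr * (ys * zt - yt * zs) - xs * (yr * zt - yt * zr) + xt * (yr * zs - ys * zr).

(* geometric factors r_z, s_z, t_z: the (r,z),(s,z),(t,z) entries of the
   inverse of the Jacobian matrix d(x,y,z)/d(r,s,t) (adjugate / determinant) *)
Definition geo_rz (vx vy vz : nat -> R) (r s t : R) : R :=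
  let X := Phic vx in let Y := Phic vy in
  (d_s X r s t * d_t Y r s t - d_t X r s t * d_s Y r s t) / Jac vx vy vz r s t.
Definition geo_sz (vx vy vz : nat -> R) (r s t : R) : R :=
  let X := Phic vx in let Y := Phic vy in
  (d_t X r s t * d_r Y r s t - d_r X r s t * d_t Y r s t) / Jac vx vy vz r s t.
Definition geo_tz (vx vy vz : nat -> R) (r s t : R) : R :=
  let X := Phic vx in let Y := Phic vy in
  (d_r X r s t * d_s Y r s t - d_s X r s t * d_r Y r s t) / Jac vx vy vz r s t.

Definition vertically_mapped (vx vy : nat -> R) : Prop :=
  vx 1%nat = vx 4%nat /\ vy 1%nat = vy 4%nat /\
  vx 2%nat = vx 5%nat /\ vy 2%nat = vy 5%nat /\
  vx 3%nat = vx 6%nat /\ vy 3%nat = vy 6%nat.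

(* (d phi / d z) o Phi for phi = l o Phi^{-1}, by the chain rule *)
Definition dz_ref (vx vy vz : nat -> R) (l : R -> R -> R -> R) (r s t : R) : R :=
  geo_rz vx vy vz r s t * d_r l r s t + geo_sz vx vy vz r s t * d_s l r s t
  + geo_tz vx vy vz r s t * d_t l r s t.

Definition Np (N : nat) : nat := ((N + 1) * (N + 2) / 2)%nat.

Definition delta {I : Type} (a b : I) : R :=
  if excluded_middle_informative (a = b) then 1 else 0.

Definition poly2 (N : nat) (p : R -> R -> R) : Prop :=
  exists c : nat -> nat -> R, forall r s,
    p r s = fold_right (fun a acc =>
              fold_right (fun b acc' => c a b * r ^ a * s ^ b + acc') 0 (seq 0 (N - a + 1))
              + acc) 0 (seq 0 (N + 1)).

Definition unisolvent (N : nat) (rp sp : nat -> R) : Prop :=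
  forall p, poly2 N p -> (forall i, (i < Np N)%nat -> p (rp i) (sp i) = 0) ->
  forall r s, p r s = 0.

Definition lagrange_tri (N : nat) (rp sp : nat -> R) (ltri : nat -> R -> R -> R) : Prop :=
  forall i, (i < Np N)%nat ->
    poly2 N (ltri i) /\
    forall i', (i' < Np N)%nat -> ltri i (rp i') (sp i') = delta i i'.

(* Legendre polynomials on [-1,1] by Bonnet's recurrence *)
Fixpoint legendre2 (n : nat) (x : R) : R * R :=   (* (P_n x, P_{n+1} x) *)
  match n with
  | O => (1, x)
  | S m => let (a, b) := legendre2 m x in
           (b, ((2 * INR m + 3) * x * b - (INR m + 1) * a) / (INR m + 2))
  end.
Definition legendre (n : nat) (x : R) : R := fst (legendre2 n x).

(* Gauss-Legendre-Lobatto points 0 = t_0 < ... < t_N = 1 on [0,1]: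
   interior points are the roots of P_N'(2t-1) *)
Definition GLL (N : nat) (tp : nat -> R) : Prop :=
  tp 0%nat = 0 /\ tp N = 1 /\
  (forall j, (j < N)%nat -> tp j < tp (S j)) /\
  (forall j, (0 < j < N)%nat -> derivable_pt_lim (legendre N) (2 * tp j - 1) 0).

Definition lag1 (N : nat) (tp : nat -> R) (j : nat) (t : R) : R :=
  fold_right (fun m acc =>
     (if Nat.eq_dec m j then 1 else (t - tp m) / (tp j - tp m)) * acc) 1 (seq 0 (N + 1)).

Definition D1D (N : nat) (tp : nat -> R) (j j' : nat) : R :=
  Deriv (lag1 N tp j') (tp j).

Definition lbasis (N : nat) (tp : nat -> R) (ltri : nat -> R -> R -> R)
  (ij : nat * nat) (r s t : R) : R :=
  ltri (fst ij) r s * lag1 N tp (snd ij) t.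

Definition msum {I : Type} (l : list I) (f : I -> R) : R :=
  fold_right (fun k acc => f k + acc) 0 l.

Definition mmul {I : Type} (l : list I) (A B : I -> I -> R) : I -> I -> R :=
  fun a b => msum l (fun k => A a k * B k b).

Definition is_inverse {I : Type} (l : list I) (A B : I -> I -> R) : Prop :=
  forall a b, In a l -> In b l ->
    mmul l A B a b = delta a b /\ mmul l B A a b = delta a b.

Definition minv {I : Type} (l : list I) (A : I -> I -> R) : I -> I -> R :=
  match excluded_middle_informative (exists B, is_inverse l A B) with
  | left H => proj1_sig (constructive_indefinite_description _ H)
  | right _ => fun _ _ => 0
  end.

Definition kron (A B : nat -> nat -> R) : nat * nat -> nat * nat -> R :=
  fun ij ij' => A (fst ij) (fst ij') * B (snd ij) (snd ij').

Definition idx_tri (N : nat) : list nat := seq 0 (Np N).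
Definition idx_W (N : nat) : list (nat * nat) := list_prod (idx_tri N) (seq 0 (N + 1)).

Definition Mk (N : nat) tp ltri vx vy vz : nat * nat -> nat * nat -> R :=
  fun a b => Wint (fun r s t =>
    lbasis N tp ltri a r s t * lbasis N tp ltri b r s t * Jac vx vy vz r s t).

Definition Szk (N : nat) tp ltri vx vy vz : nat * nat -> nat * nat -> R :=
  fun a b => Wint (fun r s t =>
    dz_ref vx vy vz (lbasis N tp ltri b) r s t * lbasis N tp ltri a r s t
    * Jac vx vy vz r s t).

Definition Dzk (N : nat) tp ltri vx vy vz : nat * nat -> nat * nat -> R :=
  mmul (idx_W N) (minv (idx_W N) (Mk N tp ltri vx vy vz)) (Szk N tp ltri vx vy vz).

(* J^k(r,s): for vertically mapped wedges J is independent of t; evaluated at t=0 *)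
Definition Mtrik (ltri : nat -> R -> R -> R) vx vy vz : nat -> nat -> R :=
  fun i i' => Tint (fun r s => ltri i r s * ltri i' r s * Jac vx vy vz r s 0).

Definition Mhattri (ltri : nat -> R -> R -> R) : nat -> nat -> R :=
  fun i i' => Tint (fun r s => ltri i r s * ltri i' r s).

Definition Ltrik (N : nat) ltri vx vy vz : nat -> nat -> R :=
  mmul (idx_tri N) (minv (idx_tri N) (Mtrik ltri vx vy vz)) (Mhattri ltri).

(* For a vertically mapped wedge the x- and y-coordinates of the map do not depend on t.
   Hence r_z = s_z = 0, the Jacobian J does not depend on t, and t_z J is the constant
   Jacobian of the projected triangle.  The integrands of M^k and S_z^k therefore separate,
   M^k = M^{tri,k} (x) M^{1D} and S_z^k = \widehat M^{tri} (x) (t_z J S^{1D}), with the 1D mass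
   matrix M^{1D} and S^{1D}_{jj'} = int_0^1 l_{j'}' l_j.  Expanding l_{j'}' in the Lagrange
   basis gives S^{1D} = M^{1D} D^{1D}_t, and M^{1D} is an invertible Gram matrix, so inverting
   the Kronecker product M^k leaves L^{tri,k} (x) (t_z J D^{1D}_t). *)

From Stdlib Require Import Reals List Lra Lia.
From Stdlib Require Import FunctionalExtensionality Classical ClassicalEpsilon ClassicalDescription.
From Coquelicot Require Import Coquelicot.
From mathcomp Require all_boot all_algebra Rstruct zify.
Open Scope R_scope.

Lemma Rint_RInt f a b : ex_RInt f a b -> Rint f a b = RInt f a b.
Proof.
  intro Hex. unfold Rint.
  destruct (excluded_middle_informative _) as [H|H].
  - destruct (constructive_indefinite_description _ H) as [v [pr <-]]; simpl.
    symmetry; apply RInt_Reals.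
  - exfalso; apply H.
    exists (RiemannInt (ex_RInt_Reals_0 _ _ _ Hex)), (ex_RInt_Reals_0 _ _ _ Hex).
    reflexivity.
Qed.

Lemma Rint_not_ex f a b : ~ ex_RInt f a b -> Rint f a b = 0.
Proof.
  intro Hn. unfold Rint.
  destruct (excluded_middle_informative _) as [H|H]; [|reflexivity].
  exfalso. destruct H as [v [pr _]]. apply Hn. now apply ex_RInt_Reals_1.
Qed.

Lemma Rint_ext f g a b : a <= b -> (forall x, a < x < b -> f x = g x) ->
  Rint f a b = Rint g a b.
Proof.
  intros Hab H.
  assert (H' : forall x, Rmin a b < x < Rmax a b -> f x = g x).
  { rewrite Rmin_left, Rmax_right by lra. exact H. }
  destruct (classic (ex_RInt f a b)) as [Hf|Hf].
  - assert (Hg : ex_RInt g a b) by now apply (ex_RInt_ext f).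
    rewrite !Rint_RInt by assumption. now apply RInt_ext.
  - assert (Hg : ~ ex_RInt g a b).
    { intro Hg. apply Hf. apply (ex_RInt_ext g); auto. intros; symmetry; auto. }
    now rewrite !Rint_not_ex.
Qed.

Lemma Rint_scal k f a b : Rint (fun x => k * f x) a b = k * Rint f a b.
Proof.
  destruct (Req_dec k 0) as [->|Hk].
  - rewrite Rmult_0_l.
    replace (fun x => 0 * f x) with (fun _ : R => 0)
      by (apply functional_extensionality; intro; ring).
    rewrite Rint_RInt, RInt_const by apply ex_RInt_const.
    apply Rmult_0_r.
  - destruct (classic (ex_RInt f a b)) as [Hf|Hf].
    + rewrite !Rint_RInt by (try apply (ex_RInt_scal f a b k); assumption).
      exact (RInt_scal f a b k Hf).
    + assert (Hkf : ~ ex_RInt (fun x => k * f x) a b).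
      { intro Hkf. apply Hf.
        apply (ex_RInt_ext (fun x => scal (/ k) (k * f x))).
        - intros x _. unfold scal; simpl; unfold mult; simpl. field. exact Hk.
        - exact (ex_RInt_scal _ a b (/ k) Hkf). }
      rewrite !Rint_not_ex by assumption. ring.
Qed.

Lemma Tint_scal k g : Tint (fun r s => k * g r s) = k * Tint g.
Proof.
  unfold Tint. rewrite <- Rint_scal. f_equal.
  apply functional_extensionality; intro r. apply Rint_scal.
Qed.

Lemma Wint_sep g h : Wint (fun r s t => g r s * h t) = Tint g * Rint h 0 1.
Proof.
  unfold Wint. rewrite <- Rint_scal. f_equal.
  apply functional_extensionality; intro t. rewrite Rmult_comm, <- Tint_scal.
  f_equal. do 2 (apply functional_extensionality; intro). ring.
Qed.

Lemma Wint_ext f g :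
  (forall r s t, 0 < r < 1 -> 0 < s < 1 - r -> 0 < t < 1 -> f r s t = g r s t) ->
  Wint f = Wint g.
Proof.
  intro H. unfold Wint, Tint.
  apply Rint_ext; [lra|]. intros t Ht.
  apply Rint_ext; [lra|]. intros r Hr.
  apply Rint_ext; [lra|]. intros s Hs. auto.
Qed.

Lemma Deriv_unique f x l : derivable_pt_lim f x l -> Deriv f x = l.
Proof.
  intro H. unfold Deriv.
  destruct (excluded_middle_informative _) as [H1|H1]; [|exfalso; eauto].
  destruct (constructive_indefinite_description _ H1) as [v Hv]; simpl.
  eapply uniqueness_limite; eauto.
Qed.

Lemma delta_refl {I : Type} (a : I) : delta a a = 1.
Proof. unfold delta. destruct (excluded_middle_informative (a = a)); tauto. Qed.

Lemma delta_neq {I : Type} (a b : I) : a <> b -> delta a b = 0.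
Proof. unfold delta. destruct (excluded_middle_informative (a = b)); tauto. Qed.

Lemma delta_sym {I : Type} (a b : I) : delta a b = delta b a.
Proof.
  destruct (classic (a = b)) as [->|Hab]; [reflexivity|].
  rewrite !delta_neq; auto.
Qed.

Lemma delta_pair {I J : Type} (i i' : I) (j j' : J) :
  delta (i, j) (i', j') = delta i i' * delta j j'.
Proof.
  destruct (classic (i = i')) as [<-|Hi]; [destruct (classic (j = j')) as [<-|Hj]|].
  - rewrite !delta_refl. ring.
  - rewrite !(delta_neq j), delta_neq by congruence. ring.
  - rewrite !(delta_neq i), delta_neq by congruence. ring.
Qed.

Section Msum.
Context {I : Type}.
Implicit Types (l : list I) (f g : I -> R).

Lemma msum_cons x l f : msum (x :: l) f = f x + msum l f.
Proof. reflexivity. Qed.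

Lemma msum_ext l f g : (forall k, In k l -> f k = g k) -> msum l f = msum l g.
Proof.
  induction l as [|x l IH]; intro H; [reflexivity|].
  rewrite !msum_cons, H, IH; auto using in_eq, in_cons.
Qed.

Lemma msum_plus l f g : msum l (fun k => f k + g k) = msum l f + msum l g.
Proof. induction l; [simpl; ring|]. rewrite !msum_cons, IHl. ring. Qed.

Lemma msum_scal_l l c f : msum l (fun k => c * f k) = c * msum l f.
Proof. induction l; [simpl; ring|]. rewrite !msum_cons, IHl. ring. Qed.

Lemma msum_scal_r l c f : msum l (fun k => f k * c) = msum l f * c.
Proof. induction l; [simpl; ring|]. rewrite !msum_cons, IHl. ring. Qed.

Lemma msum_zero l : msum l (fun _ => 0) = 0.
Proof. induction l; [reflexivity|]. rewrite msum_cons, IHl. ring. Qed.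

Lemma msum_app l1 l2 f : msum (l1 ++ l2) f = msum l1 f + msum l2 f.
Proof. induction l1; [simpl; ring|]. simpl app. rewrite !msum_cons, IHl1. ring. Qed.

Lemma msum_delta_r l f b : NoDup l -> In b l -> msum l (fun k => f k * delta k b) = f b.
Proof.
  induction l as [|x l IH]; intros Hnd Hb; [destruct Hb|].
  inversion_clear Hnd as [|? ? Hx Hnd']. rewrite msum_cons.
  destruct Hb as [<-|Hb].
  - rewrite delta_refl, (msum_ext _ _ (fun _ => 0)), msum_zero; [ring|].
    intros k Hk. rewrite delta_neq; [ring|congruence].
  - rewrite IH, delta_neq by (auto; congruence). ring.
Qed.

Lemma msum_delta_l l f a : NoDup l -> In a l -> msum l (fun k => delta a k * f k) = f a.
Proof.
  intros Hnd Ha. rewrite <- (msum_delta_r l f a Hnd Ha).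
  apply msum_ext; intros k _. rewrite delta_sym. ring.
Qed.

End Msum.

Lemma msum_map {I J : Type} (g : I -> J) (l : list I) f :
  msum (map g l) f = msum l (fun k => f (g k)).
Proof. induction l; [reflexivity|]. simpl map. rewrite !msum_cons, IHl. reflexivity. Qed.

Lemma msum_swap {I J : Type} (l1 : list I) (l2 : list J) f :
  msum l1 (fun i => msum l2 (fun j => f i j)) = msum l2 (fun j => msum l1 (fun i => f i j)).
Proof.
  induction l1 as [|x l1 IH].
  - symmetry; apply msum_zero.
  - rewrite msum_cons, IH, <- msum_plus. reflexivity.
Qed.

Lemma msum_list_prod {I J : Type} (l1 : list I) (l2 : list J) f :
  msum (list_prod l1 l2) f = msum l1 (fun i => msum l2 (fun j => f (i, j))).
Proof.
  induction l1 as [|x l1 IH]; [reflexivity|].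
  simpl list_prod. rewrite msum_app, msum_map, IH. reflexivity.
Qed.

Lemma msum_mul {I J : Type} (l1 : list I) (l2 : list J) (X : I -> R) (Y : J -> R) :
  msum l1 (fun i => msum l2 (fun j => X i * Y j)) = msum l1 X * msum l2 Y.
Proof.
  rewrite <- msum_scal_r. apply msum_ext; intros. apply msum_scal_l.
Qed.

Lemma NoDup_list_prod {I J : Type} (l1 : list I) (l2 : list J) :
  NoDup l1 -> NoDup l2 -> NoDup (list_prod l1 l2).
Proof.
  induction l1 as [|x l1 IH]; intros H1 H2; simpl list_prod; [constructor|].
  inversion_clear H1 as [|? ? Hx H1'].
  apply NoDup_app; auto.
  - apply NoDup_map_NoDup_ForallPairs; auto. intros a b _ _ E. now inversion E.
  - intros [a b] Ha Hb. apply in_map_iff in Ha as [y [E _]]. inversion E; subst.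
    apply in_prod_iff in Hb. tauto.
Qed.

Section Matrices.
Context {I : Type}.
Variable l : list I.
Hypothesis l_uniq : NoDup l.

Lemma mmul_assoc A B C a b : mmul l (mmul l A B) C a b = mmul l A (mmul l B C) a b.
Proof.
  unfold mmul.
  rewrite (msum_ext l _ (fun k => msum l (fun m => A a m * B m k * C k b)))
    by (intros; rewrite <- msum_scal_r; reflexivity).
  rewrite msum_swap. apply msum_ext; intros m _.
  rewrite <- msum_scal_l. apply msum_ext; intros; ring.
Qed.

Lemma left_inverse_eq_right_inverse A L Rm :
  (forall a b, In a l -> In b l -> mmul l L A a b = delta a b) ->
  (forall a b, In a l -> In b l -> mmul l A Rm a b = delta a b) ->
  forall a b, In a l -> In b l -> L a b = Rm a b.
Proof.
  intros HL HR a b Ha Hb.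
  transitivity (mmul l L (mmul l A Rm) a b).
  - rewrite <- (msum_delta_r l (L a) b) by assumption.
    apply msum_ext; intros k Hk. rewrite HR; auto.
  - rewrite <- mmul_assoc, <- (msum_delta_l l (fun k => Rm k b) a) by assumption.
    apply msum_ext; intros k Hk. rewrite HL; auto.
Qed.

Lemma is_inverse_unique A X Y : is_inverse l A X -> is_inverse l A Y ->
  forall a b, In a l -> In b l -> X a b = Y a b.
Proof.
  intros HX HY. apply (left_inverse_eq_right_inverse A).
  - intros; apply HX; auto.
  - intros; apply HY; auto.
Qed.

End Matrices.

Lemma minv_is_inverse {I : Type} (l : list I) A :
  (exists B, is_inverse l A B) -> is_inverse l A (minv l A).
Proof.
  intro H. unfold minv. destruct (excluded_middle_informative _) as [H1|H1]; [|tauto].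
  exact (proj2_sig (constructive_indefinite_description _ H1)).
Qed.

Lemma minv_singular {I : Type} (l : list I) A :
  ~ (exists B, is_inverse l A B) -> minv l A = fun _ _ => 0.
Proof.
  intro H. unfold minv. destruct (excluded_middle_informative _); tauto.
Qed.

Section Kronecker.
Variables l1 l2 : list nat.
Let L := list_prod l1 l2.

Lemma mmul_kron A B C D a b :
  mmul L (kron A B) (kron C D) a b = kron (mmul l1 A C) (mmul l2 B D) a b.
Proof.
  unfold mmul, kron, L. rewrite msum_list_prod, <- msum_mul.
  apply msum_ext; intros; apply msum_ext; intros; simpl; ring.
Qed.

Lemma is_inverse_kron A Ai B Bi :
  is_inverse l1 A Ai -> is_inverse l2 B Bi -> is_inverse L (kron A B) (kron Ai Bi).
Proof.
  intros HA HB [i j] [i' j'] Ha Hb.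
  apply in_prod_iff in Ha as [Hi Hj], Hb as [Hi' Hj'].
  rewrite !mmul_kron, delta_pair. unfold kron; simpl.
  destruct (HA i i' Hi Hi') as [-> ->], (HB j j' Hj Hj') as [-> ->]. auto.
Qed.

(* Restricting an inverse of [kron A B] to the rows, resp. columns, whose second index is j0
   yields a right, resp. left, inverse of A. *)
Lemma is_inverse_kron_l A B X j0 : NoDup l1 -> In j0 l2 ->
  is_inverse L (kron A B) X -> exists Ai, is_inverse l1 A Ai.
Proof.
  intros Hnd Hj0 HX.
  set (Rm := fun i i' => msum l2 (fun j => B j0 j * X (i, j) (i', j0))).
  set (Lm := fun i i' => msum l2 (fun j => X (i, j0) (i', j) * B j j0)).
  assert (HAR : forall i i', In i l1 -> In i' l1 -> mmul l1 A Rm i i' = delta i i').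
  { intros i i' Hi Hi'.
    destruct (HX (i, j0) (i', j0)) as [H1 _]; try (apply in_prod; auto).
    rewrite delta_pair, delta_refl, Rmult_1_r in H1. rewrite <- H1.
    unfold mmul, Rm, kron, L. rewrite msum_list_prod. apply msum_ext; intros k _.
    rewrite <- msum_scal_l. apply msum_ext; intros; simpl; ring. }
  assert (HLA : forall i i', In i l1 -> In i' l1 -> mmul l1 Lm A i i' = delta i i').
  { intros i i' Hi Hi'.
    destruct (HX (i, j0) (i', j0)) as [_ H1]; try (apply in_prod; auto).
    rewrite delta_pair, delta_refl, Rmult_1_r in H1. rewrite <- H1.
    unfold mmul, Lm, kron, L. rewrite msum_list_prod. apply msum_ext; intros k _.
    rewrite <- msum_scal_r. apply msum_ext; intros; simpl; ring. }
  exists Rm. intros i i' Hi Hi'. split; auto.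
  rewrite <- HLA by assumption. apply msum_ext; intros k Hk.
  rewrite (left_inverse_eq_right_inverse l1 Hnd A Lm Rm); auto.
Qed.

(* When A is singular both sides vanish, because [minv] is then the zero matrix. *)
Lemma mmul_minv_kron A B C D :
  NoDup l1 -> NoDup l2 -> (exists Bi, is_inverse l2 B Bi) ->
  forall a b, In a L -> In b L ->
  mmul L (minv L (kron A B)) (kron C D) a b
  = kron (mmul l1 (minv l1 A) C) (mmul l2 (minv l2 B) D) a b.
Proof.
  intros Hnd1 Hnd2 HB a b Ha Hb.
  destruct (classic (exists Ai, is_inverse l1 A Ai)) as [HA|HA].
  - assert (Hk := is_inverse_kron _ _ _ _ (minv_is_inverse l1 A HA) (minv_is_inverse l2 B HB)).
    assert (HL : NoDup L) by (apply NoDup_list_prod; assumption).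
    rewrite <- mmul_kron. apply msum_ext; intros k Hk'. f_equal.
    apply (is_inverse_unique L HL (kron A B)); auto.
    apply minv_is_inverse. eexists; eassumption.
  - assert (HAB : ~ exists X, is_inverse L (kron A B) X).
    { intros [X HX]. apply HA. apply (is_inverse_kron_l A B X (snd a)); auto.
      destruct a; apply in_prod_iff in Ha; tauto. }
    rewrite (minv_singular _ _ HA), (minv_singular _ _ HAB).
    unfold mmul, kron.
    rewrite (msum_ext L _ (fun _ => 0)), (msum_ext l1 _ (fun _ => 0)), !msum_zero
      by (intros; ring).
    ring.
Qed.

End Kronecker.

Module BigopBridge.
Import all_boot all_algebra Rstruct.

Lemma seq_iota a n : List.seq a n = iota a n.
Proof. by elim: n a => [|n IH] a //=; rewrite IH. Qed.

Lemma msum_big (I : Type) (l : list I) (F : I -> R) : msum l F = (\sum_(k <- l) F k)%R.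
Proof. by elim: l => [|x l IH]; rewrite ?big_nil // big_cons msum_cons IH RplusE. Qed.

Lemma msum_ord n (F : nat -> R) : msum (List.seq 0 n) F = (\sum_(i < n) F i)%R.
Proof. by rewrite msum_big seq_iota -(subn0 n) -/(index_iota 0 n) big_mkord subn0. Qed.

Lemma delta_nat (j m : nat) : delta j m = ((j == m)%:R)%R.
Proof.
  case: eqVneq => [->|ne]; first exact: delta_refl.
  by apply: delta_neq; apply/eqP.
Qed.

End BigopBridge.

Module MatrixInverse.
Import all_boot all_algebra Rstruct zify BigopBridge.
Import GRing.Theory.

Lemma is_inverse_of_free_rows n (G : nat -> nat -> R) :
  (forall v : nat -> R,
     (forall j', (j' < n)%coq_nat -> msum (List.seq 0 n) (fun j => v j * G j j') = 0) ->
     forall j, (j < n)%coq_nat -> v j = 0) ->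
  exists B, is_inverse (List.seq 0 n) G B.
Proof.
  case: n => [|n] rows_free; first by exists (fun _ _ => 0) => a b [].
  pose A : 'M[R]_n.+1 := (\matrix_(i, j) G i j)%R.
  have unitA : A \in unitmx.
  { rewrite unitmxE unitfE. apply/det0P => -[v nz0 vA]. move/negP: nz0; apply.
    pose w k := if (k < n.+1)%N then v ord0 (inord k) else 0.
    have w0 : forall j, (j < n.+1)%coq_nat -> w j = 0.
    { apply: rows_free => j' /ltP Hj'. rewrite msum_ord.
      have := congr1 (fun M : 'M_(1, n.+1) => M ord0 (@inord n j')) vA.
      rewrite !mxE => E; apply: etrans E.
      by apply: eq_bigr => k _; rewrite /w ltn_ord inord_val mxE inordK. }
    apply/eqP/rowP => i. have := w0 i (ltP (ltn_ord i)).
    by rewrite /w ltn_ord inord_val mxE. }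
  exists (fun a b => invmx A (inord a) (inord b)) => a b.
  rewrite !in_seq => Ha Hb.
  have {}Ha : (a < n.+1)%N by lia.
  have {}Hb : (b < n.+1)%N by lia.
  rewrite /mmul !msum_ord delta_nat.
  have -> : (a == b) = (@inord n a == inord b).
  { by apply/eqP/eqP => [->|/(congr1 val)] //=; rewrite !inordK. }
  split.
  - have := congr1 (fun M : 'M_n.+1 => M (@inord n a) (@inord n b)) (mulmxV unitA).
    rewrite !mxE => E; apply: etrans E. apply: eq_bigr => k _. by rewrite inord_val mxE inordK.
  - have := congr1 (fun M : 'M_n.+1 => M (@inord n a) (@inord n b)) (mulVmx unitA).
    rewrite !mxE => E; apply: etrans E. apply: eq_bigr => k _. by rewrite inord_val mxE inordK.
Qed.

End MatrixInverse.

Module LagrangePoly.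
Import all_boot all_algebra Rstruct zify BigopBridge.
Import GRing.Theory.
Local Open Scope ring_scope.

Lemma horner_derivable (p : {poly R}) t :
  derivable_pt_lim (fun x => p.[x]) t (p^`()).[t].
Proof.
  elim/poly_ind: p t => [|p c IH] t.
  - rewrite deriv0 horner0.
    under [fun x => _]functional_extensionality => x do rewrite horner0.
    exact: derivable_pt_lim_const.
  - under [fun x => _]functional_extensionality => x
      do rewrite hornerMXaddC -RplusE -RmultE.
    have := derivable_pt_lim_plus _ _ t _ _
      (derivable_pt_lim_mult _ _ t _ _ (IH t) (derivable_pt_lim_id t))
      (derivable_pt_lim_const c t).
    congr derivable_pt_lim.
    rewrite derivMXaddC hornerD hornerMX /Ranalysis1.id -!RplusE -!RmultE. ring.
Qed.

Section Lagrange.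
Variables (N : nat) (tp : nat -> R).

Definition lag_factor (j m : nat) : {poly R} :=
  if Nat.eq_dec m j then 1 else (tp j - tp m)^-1 *: ('X - (tp m)%:P).

Definition lag_poly (j : nat) : {poly R} := \prod_(m <- iota 0 N.+1) lag_factor j m.

Lemma lag1_horner j t : lag1 N tp j t = (lag_poly j).[t].
Proof.
  rewrite /lag1 /lag_poly Nat.add_1_r seq_iota horner_prod.
  elim: (iota 0 N.+1) => [|m l IH] /=; first by rewrite big_nil.
  rewrite big_cons IH RmultE /lag_factor. congr (_ * _).
  destruct (Nat.eq_dec m j); first by rewrite hornerC.
  by rewrite hornerZ hornerXsubC RminusE /Rdiv RmultE mulrC.
Qed.

Lemma size_lag_poly j : (size (lag_poly j) <= (count (predC (pred1 j)) (iota 0 N.+1)).+1)%N.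
Proof.
  have size_lag_factor m : (size (lag_factor j m) <= (m != j).+1)%N.
  { rewrite /lag_factor. destruct (Nat.eq_dec m j) as [->|ne]; first by rewrite size_poly1.
    apply: leq_trans (size_scale_leq _ _) _. rewrite size_XsubC.
    by case: eqP. }
  rewrite /lag_poly. elim: (iota 0 N.+1) => [|m l IH] /=; first by rewrite big_nil size_poly1.
  rewrite big_cons. apply: leq_trans (size_polyMleq _ _) _.
  rewrite -subn1 leq_subLR. apply: leq_trans (leq_add (size_lag_factor m) IH) _ => /=. lia.
Qed.

Lemma size_deriv_lag_poly j : (size (lag_poly j)^`() <= N.+1)%N.
Proof.
  have [->|nz] := eqVneq (lag_poly j) 0; first by rewrite deriv0 size_poly0.
  rewrite -ltnS. apply: leq_trans (lt_size_deriv nz) (leq_trans (size_lag_poly j) _).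
  by rewrite !ltnS -{2}(size_iota 0 N.+1) count_size.
Qed.

Lemma size_lag_poly_le j : (j <= N)%N -> (size (lag_poly j) <= N.+1)%N.
Proof.
  move=> Hj. apply: leq_trans (size_lag_poly j) _.
  have := count_predC (pred1 j) (iota 0 N.+1).
  rewrite size_iota (count_uniq_mem _ (iota_uniq _ _)) mem_iota. lia.
Qed.

Lemma lag1_eq_horner j : lag1 N tp j = fun t => (lag_poly j).[t].
Proof. apply: functional_extensionality => t; exact: lag1_horner. Qed.

Lemma Deriv_lag1 j t : Deriv (lag1 N tp j) t = ((lag_poly j)^`()).[t].
Proof. by apply: Deriv_unique; rewrite lag1_eq_horner; apply: horner_derivable. Qed.

Lemma lag1_derivable j t : derivable_pt_lim (lag1 N tp j) t (Deriv (lag1 N tp j) t).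
Proof. by rewrite Deriv_lag1 lag1_eq_horner; apply: horner_derivable. Qed.

Hypothesis tp_inj : forall a b, (a <= N)%coq_nat -> (b <= N)%coq_nat -> tp a = tp b -> a = b.

Lemma horner_lag_poly_node j m : (j <= N)%N -> (m <= N)%N -> (lag_poly j).[tp m] = (j == m)%:R.
Proof.
  move=> Hj Hm. rewrite /lag_poly horner_prod.
  have [<-|ne] := eqVneq j m.
  - apply: big1_seq => k /andP [_]; rewrite mem_iota => /andP [_ Hk].
    rewrite /lag_factor. destruct (Nat.eq_dec k j) as [E|ne]; first by rewrite hornerC.
    rewrite hornerZ hornerXsubC mulVf // subr_eq0.
    by apply/eqP => /tp_inj E; apply: ne; apply: esym; apply: E; lia.
  - rewrite (bigD1_seq m) ?mem_iota ?iota_uniq //=.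
    rewrite /lag_factor. destruct (Nat.eq_dec m j) as [E|E]; first by rewrite E eqxx in ne.
    by rewrite hornerZ hornerXsubC subrr mulr0 mul0r.
Qed.

Lemma lag_poly_interp (p : {poly R}) : (size p <= N.+1)%N ->
  p = \sum_(k <- iota 0 N.+1) p.[tp k] *: lag_poly k.
Proof.
  move=> Hp. apply/eqP; rewrite -subr_eq0.
  set Q := p - _.
  have rootQ : all (root Q) (map tp (iota 0 N.+1)).
  { apply/allP => _ /mapP [m Hm ->].
    rewrite /root /Q hornerD hornerN horner_sum (bigD1_seq m) ?iota_uniq //.
    have HmN : (m <= N)%N by move: Hm; rewrite mem_iota; lia.
    rewrite hornerZ horner_lag_poly_node // eqxx mulr1 big1_seq; first by rewrite /= addr0 subrr.
    move=> k /andP [/negPf ne]; rewrite mem_iota => Hk.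
    by rewrite hornerZ horner_lag_poly_node ?ne ?mulr0 //; lia. }
  have uniqQ : uniq (map tp (iota 0 N.+1)).
  { rewrite map_inj_in_uniq ?iota_uniq // => a b; rewrite !mem_iota => Ha Hb E.
    by apply: tp_inj => //; lia. }
  have sizeQ : (size Q <= N.+1)%N.
  { apply: leq_trans (size_polyD _ _) _; rewrite geq_max Hp size_polyN.
    apply: leq_trans (size_sum _ _ _) _. apply/bigmax_leqP_seq => k Hk _.
    apply: leq_trans (size_scale_leq _ _) _. apply: size_lag_poly_le.
    by move: Hk; rewrite mem_iota; lia. }
  apply: contraLR sizeQ => nzQ. rewrite -ltnNge.
  by have := max_poly_roots nzQ rootQ uniqQ; rewrite size_map size_iota.
Qed.

Local Close Scope ring_scope.

Lemma lag1_node j m : (j <= N)%coq_nat -> (m <= N)%coq_nat -> lag1 N tp j (tp m) = delta j m.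
Proof. by move=> /leP Hj /leP Hm; rewrite lag1_horner horner_lag_poly_node // delta_nat. Qed.

(* The derivative of a Lagrange polynomial has degree at most N, so it equals its interpolant. *)
Lemma Deriv_lag1_interp j t :
  Deriv (lag1 N tp j) t
  = msum (List.seq 0 (N + 1)%coq_nat) (fun k => Deriv (lag1 N tp j) (tp k) * lag1 N tp k t).
Proof.
  rewrite Deriv_lag1 {1}(lag_poly_interp _ (size_deriv_lag_poly j)) horner_sum.
  rewrite msum_big Nat.add_1_r seq_iota. apply: eq_bigr => k _.
  by rewrite hornerZ lag1_horner Deriv_lag1.
Qed.

End Lagrange.

End LagrangePoly.

Lemma d_r_Phic v r s t :
  d_r (Phic v) r s t = (v 2%nat - v 1%nat) * (1 - t) + (v 5%nat - v 4%nat) * t.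
Proof.
  apply Deriv_unique, is_derive_Reals. unfold Phic; cbn [fold_right vfun].
  auto_derive; [exact I|ring].
Qed.

Lemma d_s_Phic v r s t :
  d_s (Phic v) r s t = (v 3%nat - v 1%nat) * (1 - t) + (v 6%nat - v 4%nat) * t.
Proof.
  apply Deriv_unique, is_derive_Reals. unfold Phic; cbn [fold_right vfun].
  auto_derive; [exact I|ring].
Qed.

Lemma d_t_Phic v r s t :
  d_t (Phic v) r s t
  = (v 4%nat - v 1%nat) * (1 - r - s) + (v 5%nat - v 2%nat) * r + (v 6%nat - v 3%nat) * s.
Proof.
  apply Deriv_unique, is_derive_Reals. unfold Phic; cbn [fold_right vfun].
  auto_derive; [exact I|ring].
Qed.

Section VerticalCoordinate.
Variable v : nat -> R.
Hypotheses (v14 : v 1%nat = v 4%nat) (v25 : v 2%nat = v 5%nat) (v36 : v 3%nat = v 6%nat).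

Lemma d_r_Phic_vertical r s t : d_r (Phic v) r s t = v 2%nat - v 1%nat.
Proof. rewrite d_r_Phic, <- v14, <- v25. ring. Qed.

Lemma d_s_Phic_vertical r s t : d_s (Phic v) r s t = v 3%nat - v 1%nat.
Proof. rewrite d_s_Phic, <- v14, <- v36. ring. Qed.

Lemma d_t_Phic_vertical r s t : d_t (Phic v) r s t = 0.
Proof. rewrite d_t_Phic, <- v14, <- v25, <- v36. ring. Qed.

End VerticalCoordinate.

Definition tri_jac (vx vy : nat -> R) : R :=
  (vx 2%nat - vx 1%nat) * (vy 3%nat - vy 1%nat) - (vx 3%nat - vx 1%nat) * (vy 2%nat - vy 1%nat).

Section VerticalWedge.
Variables vx vy vz : nat -> R.
Hypothesis vertical : vertically_mapped vx vy.

Ltac vertical_derivatives :=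
  destruct vertical as (x14 & y14 & x25 & y25 & x36 & y36);
  rewrite ?(d_r_Phic_vertical vx), ?(d_s_Phic_vertical vx), ?(d_t_Phic_vertical vx),
    ?(d_r_Phic_vertical vy), ?(d_s_Phic_vertical vy), ?(d_t_Phic_vertical vy) by assumption.

Lemma Jac_vertical r s t : Jac vx vy vz r s t = tri_jac vx vy * d_t (Phic vz) r s t.
Proof. unfold Jac, tri_jac; cbv zeta. vertical_derivatives. ring. Qed.

Lemma Jac_vertical_indep_t r s t : Jac vx vy vz r s t = Jac vx vy vz r s 0.
Proof. rewrite !Jac_vertical, !d_t_Phic. ring. Qed.

Lemma geo_rz_vertical r s t : geo_rz vx vy vz r s t = 0.
Proof. unfold geo_rz; cbv zeta. vertical_derivatives. unfold Rdiv. ring. Qed.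

Lemma geo_sz_vertical r s t : geo_sz vx vy vz r s t = 0.
Proof. unfold geo_sz; cbv zeta. vertical_derivatives. unfold Rdiv. ring. Qed.

Lemma geo_tz_Jac_vertical r s t :
  Jac vx vy vz r s t <> 0 -> geo_tz vx vy vz r s t * Jac vx vy vz r s t = tri_jac vx vy.
Proof.
  intro HJ. unfold geo_tz; cbv zeta. field_simplify; [|exact HJ].
  vertical_derivatives. unfold tri_jac. ring.
Qed.

End VerticalWedge.

Lemma ex_RInt_of_ex_derive (f : R -> R) a b : (forall t, ex_derive f t) -> ex_RInt f a b.
Proof.
  intro Hf. exact (ex_RInt_continuous f a b (fun z _ => ex_derive_continuous f z (Hf z))).
Qed.

Lemma ex_derive_msum (l : list nat) (c : nat -> R) (f : nat -> R -> R) t :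
  (forall k, ex_derive (f k) t) -> ex_derive (fun x => msum l (fun k => c k * f k x)) t.
Proof.
  intro Hf. induction l as [|a l IH].
  - exact (ex_derive_const (0 : R) t).
  - apply (ex_derive_plus (fun x => c a * f a x)); auto. apply ex_derive_scal, Hf.
Qed.

Lemma Rint_lincomb (l : list nat) (c : nat -> R) (f : nat -> R -> R) (h : R -> R) a b :
  (forall k, ex_RInt (f k) a b) -> (forall x, h x = msum l (fun k => c k * f k x)) ->
  Rint h a b = msum l (fun k => c k * Rint (f k) a b).
Proof.
  intros Hf Hh. replace h with (fun x => msum l (fun k => c k * f k x))
    by (apply functional_extensionality; intro; symmetry; apply Hh).
  clear h Hh.
  assert (Hsum : ex_RInt (fun x => msum l (fun k => c k * f k x)) a b /\
     RInt (fun x => msum l (fun k => c k * f k x)) a b = msum l (fun k => c k * RInt (f k) a b)).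
  { induction l as [|k l [IH1 IH2]].
    - cbn [msum fold_right]. split; [apply ex_RInt_const|].
      rewrite RInt_const. apply Rmult_0_r.
    - assert (Hk : ex_RInt (fun x => c k * f k x) a b) by exact (ex_RInt_scal _ a b (c k) (Hf k)).
      split; [exact (ex_RInt_plus _ _ a b Hk IH1)|].
      rewrite msum_cons, <- IH2.
      etransitivity; [exact (RInt_plus _ _ a b Hk IH1)|].
      apply (f_equal (fun v => v + _)). exact (RInt_scal (f k) a b (c k) (Hf k)). }
  destruct Hsum as [H1 H2].
  rewrite Rint_RInt, H2 by exact H1.
  apply msum_ext; intros k _. rewrite Rint_RInt; auto.
Qed.

(* A positive value at x0 persists on a subinterval of positive length. *)
Lemma RInt_nonneg_eq0 (f : R -> R) :
  (forall x, continuous f x) -> (forall x, 0 <= f x) -> RInt f 0 1 = 0 ->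
  forall x, 0 <= x <= 1 -> f x = 0.
Proof.
  intros Hc Hpos Hint x0 Hx0.
  destruct (Rle_lt_or_eq_dec 0 (f x0) (Hpos x0)) as [Hlt|Heq]; [exfalso|auto].
  assert (He : 0 < f x0 / 2) by lra.
  destruct (Hc x0 (ball (f x0) (mkposreal _ He)) (locally_ball _ _)) as [d Hd].
  assert (Hd0 := cond_pos d).
  set (a := Rmax 0 (x0 - d / 2)). set (b := Rmin 1 (x0 + d / 2)).
  assert (Hab : a < b) by (unfold a, b; apply Rmax_lub_lt; apply Rmin_glb_lt; lra).
  assert (H0a : 0 <= a) by apply Rmax_l.
  assert (Hb1 : b <= 1) by apply Rmin_l.
  assert (Hex : forall u v, ex_RInt f u v)
    by (intros u v; exact (ex_RInt_continuous f u v (fun z _ => Hc z))).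
  assert (Hsplit : RInt f 0 1 = RInt f 0 a + (RInt f a b + RInt f b 1))
    by (rewrite <- (RInt_Chasles f 0 a 1), <- (RInt_Chasles f a b 1) by auto; reflexivity).
  assert (P1 : 0 <= RInt f 0 a) by (apply RInt_ge_0; auto).
  assert (P3 : 0 <= RInt f b 1) by (apply RInt_ge_0; auto).
  assert (P2 : 0 < RInt f a b).
  { apply RInt_gt_0; auto. intros y Hy.
    assert (Hyd : ball x0 d y).
    { assert (x0 - d / 2 < y) by (eapply Rle_lt_trans; [apply Rmax_r|apply Hy]).
      assert (y < x0 + d / 2) by (eapply Rlt_le_trans; [apply Hy|apply Rmin_r]).
      apply Rabs_def1; simpl; unfold minus, plus, opp; simpl; lra. }
    specialize (Hd y Hyd). apply Rabs_def2 in Hd.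
    unfold minus, plus, opp in Hd; simpl in Hd. lra. }
  lra.
Qed.

Definition M1D (N : nat) (tp : nat -> R) (j j' : nat) : R :=
  Rint (fun t => lag1 N tp j t * lag1 N tp j' t) 0 1.

Definition S1D (N : nat) (tp : nat -> R) (j j' : nat) : R :=
  Rint (fun t => Deriv (lag1 N tp j') t * lag1 N tp j t) 0 1.

Section Nodes.
Variables (N : nat) (tp : nat -> R).
Hypotheses (tp_0 : tp 0%nat = 0) (tp_N : tp N = 1)
  (tp_incr : forall j, (j < N)%nat -> tp j < tp (S j)).

Lemma tp_lt a b : (a < b)%nat -> (b <= N)%nat -> tp a < tp b.
Proof.
  induction b as [|b IH]; intros Hab HbN; [lia|].
  specialize (tp_incr b ltac:(lia)).
  destruct (Nat.eq_dec a b) as [->|Hne]; [assumption|].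
  specialize (IH ltac:(lia) ltac:(lia)). lra.
Qed.

Lemma tp_inj a b : (a <= N)%nat -> (b <= N)%nat -> tp a = tp b -> a = b.
Proof.
  intros Ha Hb E. destruct (Nat.lt_total a b) as [H|[H|H]]; auto.
  - pose proof (tp_lt a b H Hb). lra.
  - pose proof (tp_lt b a H Ha). lra.
Qed.

Lemma tp_in01 m : (m <= N)%nat -> 0 <= tp m <= 1.
Proof.
  intro Hm. split.
  - destruct m as [|m]; [lra|]. pose proof (tp_lt 0 (S m) ltac:(lia) Hm). lra.
  - destruct (Nat.eq_dec m N) as [->|Hne]; [lra|].
    pose proof (tp_lt m N ltac:(lia) (le_n N)). lra.
Qed.

Let nodes := seq 0 (N + 1).

Lemma ex_derive_lag1 j t : ex_derive (lag1 N tp j) t.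
Proof. eexists. apply is_derive_Reals, LagrangePoly.lag1_derivable. Qed.

Lemma ex_RInt_lag1_mul j k : ex_RInt (fun t => lag1 N tp j t * lag1 N tp k t) 0 1.
Proof. apply ex_RInt_of_ex_derive; intro t. apply ex_derive_mult; apply ex_derive_lag1. Qed.

Lemma S1D_eq_M1D_D1D j j' : S1D N tp j j' = mmul nodes (M1D N tp) (D1D N tp) j j'.
Proof.
  unfold S1D, mmul.
  rewrite (Rint_lincomb nodes (fun k => D1D N tp k j') (fun k t => lag1 N tp j t * lag1 N tp k t)).
  - apply msum_ext; intros; unfold M1D; ring.
  - intro; apply ex_RInt_lag1_mul.
  - intro t. rewrite (LagrangePoly.Deriv_lag1_interp N tp tp_inj), <- msum_scal_r.
    apply msum_ext; intros; unfold D1D; ring.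
Qed.

Definition lag1_comb (v : nat -> R) (t : R) : R := msum nodes (fun k => v k * lag1 N tp k t).

Lemma ex_derive_lag1_comb v t : ex_derive (lag1_comb v) t.
Proof. apply ex_derive_msum. intro; apply ex_derive_lag1. Qed.

Lemma lag1_comb_node v j : (j <= N)%nat -> lag1_comb v (tp j) = v j.
Proof.
  intro Hj. unfold lag1_comb. rewrite <- (msum_delta_r nodes v j).
  - apply msum_ext; intros k Hk. apply in_seq in Hk.
    rewrite (LagrangePoly.lag1_node N tp tp_inj) by lia. reflexivity.
  - apply seq_NoDup.
  - apply in_seq; lia.
Qed.

Lemma Rint_lag1_comb_sqr v :
  Rint (fun t => lag1_comb v t * lag1_comb v t) 0 1
  = msum nodes (fun k => v k * msum nodes (fun i => v i * M1D N tp i k)).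
Proof.
  rewrite (Rint_lincomb nodes v (fun k t => lag1_comb v t * lag1 N tp k t)).
  - apply msum_ext; intros k _. f_equal.
    apply (Rint_lincomb nodes v (fun i t => lag1 N tp i t * lag1 N tp k t)).
    + intro; apply ex_RInt_lag1_mul.
    + intro t. unfold lag1_comb. rewrite <- msum_scal_r. apply msum_ext; intros; ring.
  - intro; apply ex_RInt_of_ex_derive; intro.
    apply ex_derive_mult; [apply ex_derive_lag1_comb|apply ex_derive_lag1].
  - intro t. unfold lag1_comb at 1. rewrite <- msum_scal_r. apply msum_ext; intros; ring.
Qed.

(* If v^T M1D = 0, then int_0^1 q^2 = v^T M1D v = 0 for q = sum_k v_k l_k, so q vanishes
   at every node t_j, where its value is v_j. *)
Lemma M1D_invertible : exists B, is_inverse nodes (M1D N tp) B.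
Proof.
  apply MatrixInverse.is_inverse_of_free_rows. intros v Hv j Hj.
  assert (Hq := ex_derive_lag1_comb v).
  assert (Hqq : RInt (fun t => lag1_comb v t * lag1_comb v t) 0 1 = 0).
  { rewrite <- Rint_RInt
      by (apply ex_RInt_of_ex_derive; intro; apply ex_derive_mult; apply Hq).
    rewrite Rint_lag1_comb_sqr, (msum_ext nodes _ (fun _ => 0)); [apply msum_zero|].
    intros k Hk. apply in_seq in Hk. rewrite Hv by lia. ring. }
  assert (Hnode := RInt_nonneg_eq0 _
    (fun t => ex_derive_continuous _ _ (ex_derive_mult _ _ t (Hq t) (Hq t)))
    (fun t => Rle_0_sqr (lag1_comb v t)) Hqq (tp j) (tp_in01 j ltac:(lia))).
  cbv beta in Hnode. rewrite lag1_comb_node in Hnode by lia.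
  apply Rmult_integral in Hnode. tauto.
Qed.

Lemma minv_M1D_S1D c j j' : In j nodes ->
  mmul nodes (minv nodes (M1D N tp)) (fun k k' => c * S1D N tp k k') j j' = c * D1D N tp j j'.
Proof.
  intro Hj. set (Mi := minv nodes (M1D N tp)).
  assert (HMi : is_inverse nodes (M1D N tp) Mi) by exact (minv_is_inverse _ _ M1D_invertible).
  transitivity (c * mmul nodes Mi (mmul nodes (M1D N tp) (D1D N tp)) j j').
  - unfold mmul at 1 2. rewrite <- msum_scal_l.
    apply msum_ext; intros k _. rewrite S1D_eq_M1D_D1D. ring.
  - rewrite <- mmul_assoc. f_equal.
    rewrite <- (msum_delta_l nodes (fun k => D1D N tp k j') j) by (apply seq_NoDup || exact Hj).
    apply msum_ext; intros k Hk. f_equal. apply (HMi j k Hj Hk).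
Qed.

End Nodes.

Lemma Mk_kron N tp ltri vx vy vz : vertically_mapped vx vy ->
  Mk N tp ltri vx vy vz = kron (Mtrik ltri vx vy vz) (M1D N tp).
Proof.
  intro vertical.
  do 2 (apply functional_extensionality; intro). unfold Mk, kron, Mtrik, M1D.
  rewrite <- Wint_sep. f_equal.
  do 3 (apply functional_extensionality; intro). unfold lbasis.
  rewrite (Jac_vertical_indep_t vx vy vz vertical). ring.
Qed.

Lemma Szk_kron N tp ltri vx vy vz : vertically_mapped vx vy ->
  (forall r s t, inW r s t -> Jac vx vy vz r s t <> 0) ->
  Szk N tp ltri vx vy vz = kron (Mhattri ltri) (fun j j' => tri_jac vx vy * S1D N tp j j').
Proof.
  intros vertical HJ.
  apply functional_extensionality; intros [i j]; apply functional_extensionality; intros [i' j'].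
  unfold Szk, kron, Mhattri, S1D; simpl.
  rewrite <- Rmult_assoc, (Rmult_comm (Tint _)), <- Tint_scal, <- Wint_sep. apply Wint_ext.
  intros r s t Hr Hs Ht.
  assert (HJrst : Jac vx vy vz r s t <> 0) by (apply HJ; unfold inW, inT; lra).
  assert (Hdt : d_t (lbasis N tp ltri (i', j')) r s t = ltri i' r s * Deriv (lag1 N tp j') t).
  { apply Deriv_unique, derivable_pt_lim_scal, LagrangePoly.lag1_derivable. }
  unfold dz_ref. rewrite Hdt, geo_rz_vertical, geo_sz_vertical by exact vertical.
  rewrite <- (geo_tz_Jac_vertical vx vy vz vertical r s t HJrst). unfold lbasis; simpl. ring.
Qed.

Theorem mainTheorem6
  (N : nat) (HN : (1 <= N)%nat)
  (vx vy vz : nat -> R)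
  (Hvert : vertically_mapped vx vy)
  (HJ : forall r s t, inW r s t -> 0 < Jac vx vy vz r s t)
  (rp sp : nat -> R)
  (Hpts : forall i, (i < Np N)%nat -> inT (rp i) (sp i))
  (Huni : unisolvent N rp sp)
  (ltri : nat -> R -> R -> R) (Hlag : lagrange_tri N rp sp ltri)
  (tp : nat -> R) (Hgll : GLL N tp) :
  exists c : R,
    (forall r s t, inW r s t -> geo_tz vx vy vz r s t * Jac vx vy vz r s t = c) /\
    (forall a b, In a (idx_W N) -> In b (idx_W N) ->
       Dzk N tp ltri vx vy vz a b
       = kron (Ltrik N ltri vx vy vz) (fun j j' => c * D1D N tp j j') a b).
Proof.
  destruct Hgll as (tp_0 & tp_N & tp_incr & _).
  assert (HJ0 : forall r s t, inW r s t -> Jac vx vy vz r s t <> 0)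
    by (intros r s t HW; specialize (HJ r s t HW); lra).
  exists (tri_jac vx vy). split.
  { intros r s t HW. apply geo_tz_Jac_vertical; auto. }
  intros a b Ha Hb.
  unfold Dzk. rewrite Mk_kron, Szk_kron by assumption.
  rewrite (mmul_minv_kron (idx_tri N) (seq 0 (N + 1)))
    by (apply seq_NoDup || exact (M1D_invertible N tp tp_0 tp_N tp_incr) || assumption).
  unfold kron. f_equal. apply minv_M1D_S1D; auto.
  destruct a as [i j]. apply in_prod_iff in Ha. tauto.
Qed.
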